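(* For every $\varepsilon>0$, the set $K_{2.33529\dots+\varepsilon}$ is uncountable, where $2.33529\dots$ is the unique real root of $x^5-x^4-2x^3-2x^2-x-1$ and $K_\alpha$ denotes the set of all closed permutation classes $X$ for which there exists $n_0$ such that $|X\cap S_n|<\alpha^n$ for all $n>n_0$.
   Context: $S_n$ is the set of permutations of $[n]$, $S=\bigcup_n S_n$; $\pi\prec\rho$ means $\rho$ (as a sequence) has a subsequence order-isomorphic to $\pi$; a closed permutation class is a set $X\subset S$ such that $\pi\prec\sigma\in X$ implies $\pi\in X$. *)

From mathcomp Require Import all_boot all_order all_algebra all_fingroup.
From mathcomp Require Import reals.
Set Implicit Arguments. Unset Strict Implicit. Unset Printing Implicit Defensive.
Import Order.TTheory GRing.Theory Num.Theory.

Definition Perm := {n : nat & 'S_n}.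

Definition contains (k n : nat) (p : 'S_k) (s : 'S_n) : Prop :=
  exists f : 'I_k -> 'I_n,
    (forall i j : 'I_k, (i < j)%N -> (f i < f j)%N) /\
    (forall i j : 'I_k, (p i < p j)%N = (s (f i) < s (f j))%N).

Definition PermSet := Perm -> bool.

Definition closed_class (X : PermSet) : Prop :=
  forall (k n : nat) (p : 'S_k) (s : 'S_n),
    contains p s -> X (existT _ n s) -> X (existT _ k p).

Definition level_count (X : PermSet) (n : nat) : nat :=
  #|[set s : 'S_n | X (existT _ n s)]|.

Definition K_class (R : realType) (alpha : R) (X : PermSet) : Prop :=
  closed_class X /\
  exists n0 : nat, forall n : nat, (n0 < n)%N ->
    ((level_count X n)%:R < alpha ^+ n)%R.

Definition countable_family (F : PermSet -> Prop) : Prop :=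
  exists e : nat -> PermSet, forall X, F X -> exists m : nat, e m = X.

Definition uncountable_family (F : PermSet -> Prop) : Prop :=
  ~ countable_family F.

From mathcomp Require Import all_boot all_order all_algebra all_fingroup.
From mathcomp Require Import reals.
From mathcomp Require Import boolp zify ring lra.
Import Order.TTheory GRing.Theory Num.Theory.

Set Implicit Arguments.
Unset Strict Implicit.
Unset Printing Implicit Defensive.

(* The anchored increasing oscillations [osc t] (the path 2-1-4-3-6-5-... of
   inversions, closed into a 4-cycle at each end) form an infinite antichain,
   so the downsets of its subfamilies are continuum many distinct closed
   classes.  Every pattern of an oscillation has inversions of span at most 4,
   hence is determined by the 4-bit codes recording its inversions with the
   next four positions; in the interior, consecutive codes form admissible
   triples over a 5-letter alphabet.  A super-eigenvector for the eigenvalue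
   9/4 of the transfer matrix of admissible triples bounds the number of
   patterns of length n by C (9/4)^n, and the real root 2.335... of the
   quintic exceeds 9/4. *)

(** * Patterns, read on natural numbers *)

Definition nat_ext k n (f : 'I_k -> 'I_n) (a : nat) : nat :=
  if insub a is Some i then val (f i) else 0.

Lemma nat_extE k n (f : 'I_k -> 'I_n) (i : 'I_k) : nat_ext f i = f i.
Proof. by rewrite /nat_ext valK. Qed.

Lemma nat_ext_lt k n (f : 'I_k -> 'I_n) a : a < k -> nat_ext f a < n.
Proof. by rewrite /nat_ext; case: insubP => [i _ _|/negP //]; rewrite ltn_ord. Qed.

Lemma contains_refl n (s : 'S_n) : contains s s.
Proof. by exists id. Qed.

Lemma contains_trans k m n (p : 'S_k) (q : 'S_m) (s : 'S_n) :
  contains p q -> contains q s -> contains p s.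
Proof.
case=> [f [f_incr f_ord]] [g [g_incr g_ord]]; exists (g \o f); split=> i j /=.
  by move=> /f_incr /g_incr.
by rewrite f_ord g_ord.
Qed.

Lemma containsP k n (p : 'S_k) (s : 'S_n) : contains p s ->
  exists F : nat -> nat,
  [/\ forall a b, a < b < k -> F a < F b,
      forall a, a < k -> F a < n &
      forall a b, a < k -> b < k ->
        (nat_ext p a < nat_ext p b) = (nat_ext s (F a) < nat_ext s (F b))].
Proof.
case=> f [f_incr f_ord]; exists (nat_ext f); split=> [a b /andP[ab bk]|a|a b ak bk].
- have ak := ltn_trans ab bk.
  by rewrite -[a]/(val (Ordinal ak)) -[b]/(val (Ordinal bk)) !nat_extE f_incr.
- exact: nat_ext_lt.
- by rewrite -[a]/(val (Ordinal ak)) -[b]/(val (Ordinal bk)) !nat_extE f_ord.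
Qed.

(** * Downsets of an antichain *)

Section AntichainDownsets.

Variables (L : nat -> nat) (w : forall t, 'S_(L t)).
Hypothesis w_antichain : forall t t', contains (w t) (w t') -> t = t'.

Definition downset (A : nat -> bool) : PermSet :=
  fun P => `[< exists t, A t /\ contains (projT2 P) (w t) >].

Lemma downset_closed A : closed_class (downset A).
Proof.
move=> k n p s p_s /asboolP[t [At s_w]]; apply/asboolP; exists t; split=> //.
exact: contains_trans p_s s_w.
Qed.

Lemma level_count_downset A n :
  level_count (downset A) n <= #|[set s : 'S_n | `[< exists t, contains s (w t) >]]|.
Proof.
apply/subset_leq_card/subsetP => s; rewrite !inE => /asboolP[t [_ s_w]].
by apply/asboolP; exists t.
Qed.

Lemma downset_antichain A t : downset A (existT _ (L t) (w t)) = A t.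
Proof.
apply/asboolP/idP => [[t' [At' /w_antichain ->]] //|At].
by exists t; split=> //; apply: contains_refl.
Qed.

Lemma uncountable_downsets (F : PermSet -> Prop) :
  (forall A, F (downset A)) -> uncountable_family F.
Proof.
move=> F_downset [e e_onto].
pose diag t := ~~ e t (existT _ (L t) (w t)).
have [m e_m] := e_onto _ (F_downset diag).
by have := downset_antichain diag m; rewrite /diag -e_m; case: (e m _).
Qed.

End AntichainDownsets.

(** * A permutation is determined by its inversions *)

Lemma card_ord_lt n m : m <= n -> #|[set i : 'I_n | i < m]| = m.
Proof.
move=> le_mn; have widen_inj : injective (widen_ord le_mn).
  by move=> i j /(congr1 val) /= /val_inj.
rewrite -[RHS](card_ord m) -cardsT -(card_imset _ widen_inj).
apply: eq_card => i; rewrite inE.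
apply/idP/imsetP => [lt_im|[j _ ->]]; last exact: (ltn_ord j).
by exists (Ordinal lt_im) => //; apply: val_inj.
Qed.

Lemma perm_val_card n (s : 'S_n) (i : 'I_n) : val (s i) = #|[set j | s j < s i]|.
Proof.
rewrite -(card_imset _ (@perm_inj _ s)) -[LHS](card_ord_lt (ltnW (ltn_ord (s i)))).
apply: eq_card => v; rewrite inE; apply/idP/imsetP => [lt_v|[j]].
  by exists ((s^-1)%g v); rewrite ?inE permKV.
by rewrite inE => lt_j ->.
Qed.

Lemma perm_inversions_inj n (s1 s2 : 'S_n) :
  (forall i j : 'I_n, i < j -> (s1 j < s1 i) = (s2 j < s2 i)) -> s1 = s2.
Proof.
move=> same_inv; apply/permP => i; apply/val_inj.
rewrite /= (perm_val_card s1 i) (perm_val_card s2 i); apply: eq_card => j; rewrite !inE.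
case: (ltngtP j i) => [lt_ji|lt_ij|/val_inj ->]; last by rewrite !ltnn.
- have neq_s (s : 'S_n) : (s j : nat) != s i.
    by apply/eqP => /val_inj /perm_inj eq_ji; rewrite eq_ji ltnn in lt_ji.
  by rewrite !ltn_neqAle (neq_s s1) (neq_s s2) /= (leqNgt (s1 j)) (leqNgt (s2 j)) same_inv.
- exact: same_inv.
Qed.

Section RankPermutation.

Variables (L : nat) (g : nat -> nat).
Hypothesis g_inj : {in gtn L &, injective g}.

Definition rank (i : nat) : nat := count (fun j => g j < g i) (iota 0 L).

Lemma rank_lt i : i < L -> rank i < L.
Proof.
move=> lt_iL; rewrite /rank -[X in _ < X](size_iota 0 L) -(count_predC (fun j => g j < g i)).
rewrite -[X in X < _]addn0 ltn_add2l -has_count; apply/hasP; exists i => /=.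
  by rewrite mem_iota.
by rewrite ltnn.
Qed.

Lemma rank_mono i j : i < L -> g i < g j -> rank i < rank j.
Proof.
move=> lt_iL lt_ij; rewrite /rank.
have le_count : count (predU (fun k => g k < g i) (pred1 i)) (iota 0 L) <=
                count (fun k => g k < g j) (iota 0 L).
  apply: sub_count => k /= /orP [lt_ki|/eqP -> //]; exact: ltn_trans lt_ki lt_ij.
have disj : count (predI (fun k => g k < g i) (pred1 i)) (iota 0 L) = 0.
  apply/eqP; rewrite -leqn0 leqNgt -has_count; apply/hasP => -[k _ /= /andP[lt_ki /eqP eq_ki]].
  by rewrite eq_ki ltnn in lt_ki.
have count_i : @count nat (pred1 i) (iota 0 L) = 1.
  by rewrite count_uniq_mem ?iota_uniq // mem_iota lt_iL.
have := count_predUI (fun k => g k < g i) (pred1 i) (iota 0 L); lia.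
Qed.

Lemma rank_ltE i j : i < L -> j < L -> (rank i < rank j) = (g i < g j).
Proof.
move=> lt_iL lt_jL; apply/idP/idP => [lt_rank|]; last exact: rank_mono.
case: (ltngtP (g i) (g j)) => // [lt_gji|eq_g]; first by have := rank_mono lt_jL lt_gji; lia.
by move: lt_rank; rewrite (g_inj lt_iL lt_jL eq_g) ltnn.
Qed.

Definition rank_ord (i : 'I_L) : 'I_L := Ordinal (rank_lt (ltn_ord i)).

Lemma rank_ord_inj : injective rank_ord.
Proof.
move=> i j /(congr1 val) /= eq_rank; apply/val_inj/(g_inj (ltn_ord i) (ltn_ord j)).
have := rank_ltE (ltn_ord i) (ltn_ord j); have := rank_ltE (ltn_ord j) (ltn_ord i).
by rewrite eq_rank ltnn; case: ltngtP.
Qed.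

Definition rank_perm : 'S_L := perm rank_ord_inj.

Lemma rank_perm_ltE a b : a < L -> b < L ->
  (nat_ext rank_perm a < nat_ext rank_perm b) = (g a < g b).
Proof.
move=> lt_aL lt_bL.
by rewrite -[a]/(val (Ordinal lt_aL)) -[b]/(val (Ordinal lt_bL)) !nat_extE !permE rank_ltE.
Qed.

End RankPermutation.

(** * Anchored increasing oscillations *)

Definition osc_rel (x y : nat) : bool := odd x && ((y == x.+1) || (y == x + 3)).

Definition osc_inv (M x y : nat) : bool :=
  [|| (x == 0) && ((y == 2) || (y == 4)),
      osc_rel x y && (y <= M) | [&& y == M.+1, odd x & M - 3 <= x]].

(* Position [x] of [1..M] gets value [4x], or [4(x+3)+2] when [x] is odd, so
   that the inversions among them form the path 2-1-4-3-6-5-...; the anchors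
   at positions 0 and M+1 close both ends of this path into 4-cycles. *)
Definition osc_val (M x : nat) : nat :=
  if x == 0 then 17 else if x == M.+1 then 4 * M + 1 else 4 * x + 14 * odd x.

Lemma osc_val_ltE M x y : 5 <= M -> x < y <= M.+1 ->
  (osc_val M y < osc_val M x) = osc_inv M x y.
Proof.
move=> M_ge /andP[lt_xy le_yM]; rewrite /osc_val /osc_inv /osc_rel.
by case: (x =P 0); case: (x =P M.+1); case: (y =P 0); case: (y =P M.+1) => /=; lia.
Qed.

Lemma osc_val_inj M : 5 <= M -> {in gtn M.+2 &, injective (osc_val M)}.
Proof.
move=> M_ge x y lt_xM lt_yM; rewrite /osc_val.
by case: (x =P 0); case: (x =P M.+1); case: (y =P 0); case: (y =P M.+1) => /=; lia.
Qed.

Definition osc_mid (t : nat) : nat := 2 * t + 8.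

Lemma osc_mid_ge5 t : 5 <= osc_mid t.
Proof. by rewrite /osc_mid; lia. Qed.

Definition osc (t : nat) : 'S_(osc_mid t).+2 := rank_perm (osc_val_inj (osc_mid_ge5 t)).

Lemma osc_ltE t a b : a < b < (osc_mid t).+2 ->
  (nat_ext (osc t) b < nat_ext (osc t) a) = osc_inv (osc_mid t) a b.
Proof.
move=> /andP[lt_ab lt_b]; have lt_a := ltn_trans lt_ab lt_b.
by rewrite rank_perm_ltE // osc_val_ltE ?osc_mid_ge5 // lt_ab.
Qed.

Lemma osc_patternP k t (p : 'S_k) : contains p (osc t) ->
  exists F : nat -> nat,
  [/\ forall a b, a < b < k -> F a < F b,
      forall a, a < k -> F a < (osc_mid t).+2 &
      forall a b, a < b < k -> (nat_ext p b < nat_ext p a) = osc_inv (osc_mid t) (F a) (F b)].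
Proof.
case/containsP => F [F_incr F_lt F_ord]; exists F; split=> // a b /andP[lt_ab lt_bk].
have lt_ak := ltn_trans lt_ab lt_bk.
by rewrite F_ord // osc_ltE // F_incr ?lt_ab ?F_lt.
Qed.

(* An embedding of one oscillation into another that preserves positions,
   order and inversions is the identity: the 4-cycle at 0 pins the start, each
   further position is pinned by its inversions with earlier ones, and the last
   anchor can then only go to the last anchor of the target. *)
Section OscillationEmbedding.

Variables (M M' : nat) (F : nat -> nat).
Hypotheses (M_ge8 : 8 <= M) (M'_ge8 : 8 <= M') (M_even : ~~ odd M) (M'_even : ~~ odd M').
Hypothesis F_incr : forall a b, a < b <= M.+1 -> F a < F b.
Hypothesis F_le : forall a, a <= M.+1 -> F a <= M'.+1.
Hypothesis F_inv : forall a b, a < b <= M.+1 -> osc_inv M' (F a) (F b) = osc_inv M a b.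

Lemma embed_start : [/\ F 0 = 0, F 1 = 1, F 2 = 2, F 3 = 3 & F 4 = 4].
Proof.
have lt01 : F 0 < F 1 by apply: F_incr; lia.
have lt12 : F 1 < F 2 by apply: F_incr; lia.
have lt23 : F 2 < F 3 by apply: F_incr; lia.
have lt34 : F 3 < F 4 by apply: F_incr; lia.
have lt4M' : F 4 <= M' by have := F_le (a := 5); have := @F_incr 4 5; lia.
have inv02 : osc_inv M' (F 0) (F 2) by rewrite F_inv //; lia.
have inv04 : osc_inv M' (F 0) (F 4) by rewrite F_inv //; lia.
move: inv02 inv04; rewrite /osc_inv /osc_rel => inv02 inv04.
have F0 : F 0 = 0 by lia.
by rewrite F0 /= in inv02 inv04; split; lia.
Qed.

Lemma embed_id a : a <= M -> F a = a.
Proof.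
elim/ltn_ind: a => a IH le_aM.
case: (leqP a 4) => [le_a4|lt4a].
  by case: embed_start; case: a {IH le_aM} le_a4 => [|[|[|[|[|]]]]].
have F_id b : b < a -> F b = b by move=> lt_ba; apply: IH; lia.
have lt_pred : a - 1 < F a by rewrite -(F_id (a - 1)); [apply: F_incr|]; lia.
case: (boolP (odd a)) => odd_a.
- have lt_succ : F a < F a.+1 by apply: F_incr; lia.
  have le_succ : F a.+1 <= M' by have := F_le (a := a.+2); have := @F_incr a.+1 a.+2; lia.
  have : osc_inv M' (F (a - 2)) (F a.+1) by rewrite F_inv /osc_inv /osc_rel; lia.
  by rewrite (F_id (a - 2)) /osc_inv /osc_rel; lia.
- have le_a : F a <= M' by have := F_le (a := a.+1); have := @F_incr a a.+1; lia.
  have : osc_inv M' (F (a - 1)) (F a) by rewrite F_inv /osc_inv /osc_rel; lia.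
  have : osc_inv M' (F (a - 3)) (F a) by rewrite F_inv /osc_inv /osc_rel; lia.
  by rewrite (F_id (a - 1)) ?(F_id (a - 3)) /osc_inv /osc_rel; lia.
Qed.

Lemma embed_mid_eq : M = M'.
Proof.
have lt_last : M < F M.+1 by rewrite -{1}(embed_id (leqnn M)); apply: F_incr; lia.
have le_last := F_le (leqnn M.+1).
have : osc_inv M' (F (M - 3)) (F M.+1) by rewrite F_inv /osc_inv /osc_rel; lia.
by rewrite embed_id /osc_inv /osc_rel; lia.
Qed.

End OscillationEmbedding.

Lemma osc_antichain t t' : contains (osc t) (osc t') -> t = t'.
Proof.
case/osc_patternP => F [F_incr F_le F_inv].
suff : osc_mid t = osc_mid t' by rewrite /osc_mid; lia.
apply: (embed_mid_eq (F := F)); rewrite /osc_mid.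
- lia.
- lia.
- by rewrite oddD oddM.
- by rewrite oddD oddM.
- by move=> a b ?; apply: F_incr.
- by move=> a ?; rewrite -ltnS; apply: F_le.
- by move=> a b lt_ab; rewrite -F_inv // osc_ltE.
Qed.

(** * Encoding permutations whose inversions are short *)

Definition bits4 (f : nat -> bool) : nat := f 1 + 2 * f 2 + 4 * f 3 + 8 * f 4.

Lemma bits4_lt f : bits4 f < 16.
Proof. by rewrite /bits4; case: (f 1); case: (f 2); case: (f 3); case: (f 4). Qed.

Lemma bits4_inj f g : bits4 f = bits4 g -> forall j, 0 < j <= 4 -> f j = g j.
Proof.
rewrite /bits4 => eq_fg [|[|[|[|[|j]]]]] // _; move: eq_fg;
  by case: (f 1); case: (f 2); case: (f 3); case: (f 4);
     case: (g 1); case: (g 2); case: (g 3); case: (g 4).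
Qed.

Lemma eq_bits4 f g : (forall j, 0 < j <= 4 -> f j = g j) -> bits4 f = bits4 g.
Proof. by move=> eq_fg; rewrite /bits4 !eq_fg. Qed.

Definition inv_at n (s : 'S_n) (a b : nat) : bool := (b < n) && (nat_ext s b < nat_ext s a).

Definition code n (s : 'S_n) (a : nat) : nat := bits4 (fun j => inv_at s a (a + j)).

Definition enc n (s : 'S_n) : seq nat := map (code s) (iota 0 n).

Definition short_inversions n (s : 'S_n) : Prop :=
  forall a b, a < b < n -> nat_ext s b < nat_ext s a -> b <= a + 4.

Lemma enc_inj n (s1 s2 : 'S_n) :
  short_inversions s1 -> short_inversions s2 -> enc s1 = enc s2 -> s1 = s2.
Proof.
move=> short1 short2 eq_enc; apply: perm_inversions_inj => i j lt_ij.
rewrite -!nat_extE; move: (val i) (val j) lt_ij (ltn_ord j) => a b lt_ab lt_bn.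
case: (leqP b (a + 4)) => [le_b|lt_b]; last first.
  by apply/idP/idP => [/short1|/short2]; rewrite ?lt_ab ?lt_bn //; lia.
have eq_code : code s1 a = code s2 a.
  have := congr1 (nth 0 ^~ a) eq_enc.
  by rewrite /enc !(nth_map 0) ?size_iota ?nth_iota //; lia.
have := bits4_inj eq_code (j := b - a); rewrite /inv_at subnKC ?(ltnW lt_ab) // lt_bn.
by apply; lia.
Qed.

Fixpoint words (A : seq nat) (k : nat) : seq (seq nat) :=
  if k is k'.+1 then [seq c :: w | c <- A, w <- words A k'] else [:: [::]].

Lemma size_words A k : size (words A k) = size A ^ k.
Proof. by elim: k => //= k IH; rewrite size_allpairs IH expnS. Qed.

Lemma mem_words A (w : seq nat) : {subset w <= A} -> w \in words A (size w).
Proof.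
elim: w => //= c w IH sub_cw.
apply: (allpairs_f (fun c w => c :: w)); first by apply: sub_cw; rewrite mem_head.
by apply: IH => x x_in; apply: sub_cw; rewrite inE x_in orbT.
Qed.

(** * Codes of patterns of the oscillation *)

Definition osc_code (X : nat -> nat) (a : nat) : nat :=
  bits4 (fun j => osc_rel (X a) (X (a + j))).

Definition gaps (X : nat -> nat) (a n : nat) : seq nat :=
  [seq X (a + i.+1) - X (a + i) | i <- iota 0 n].

Definition gap_code (b : bool) (gs : seq nat) : nat :=
  bits4 (fun j => b && (sumn (take j gs) \in [:: 1; 3])).

Section Gaps.

Variables (X : nat -> nat) (a : nat).

Lemma size_gaps n : size (gaps X a n) = n.
Proof. by rewrite size_map size_iota. Qed.

Lemma gaps_pos n : (forall i, i < n -> X (a + i) < X (a + i.+1)) -> all (leq 1) (gaps X a n).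
Proof.
move=> X_step; apply/allP => g /mapP[i]; rewrite mem_iota => /andP[_ lt_in] ->.
by rewrite subn_gt0 X_step.
Qed.

Lemma sumn_gaps n : (forall i j, i <= j <= n -> X (a + i) <= X (a + j)) ->
  sumn (gaps X a n) = X (a + n) - X a.
Proof.
elim: n => [|n IH] X_mono; first by rewrite addn0 subnn.
rewrite /gaps -addn1 iotaD map_cat sumn_cat -/(gaps X a n) IH; last first.
  by move=> i j ?; apply: X_mono; lia.
have := X_mono 0 n; have := X_mono n n.+1; rewrite /= add0n addn0 addn1 addnS; lia.
Qed.

Lemma take_gaps n j : j <= n -> take j (gaps X a n) = gaps X a j.
Proof. by move=> le_jn; rewrite /gaps -map_take take_iota (minn_idPl le_jn). Qed.

Lemma drop_gaps n d : drop d (gaps X a n) = gaps X (a + d) (n - d).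
Proof.
rewrite /gaps -map_drop drop_iota add0n -[d in iota d _]addn0 iotaDl -map_comp.
by apply: eq_map => i /=; rewrite -addnS !addnA.
Qed.

Lemma osc_code_gaps n : 4 <= n -> (forall i j, i < j <= n -> X (a + i) < X (a + j)) ->
  osc_code X a = gap_code (odd (X a)) (gaps X a n).
Proof.
move=> le4n X_incr; apply: eq_bits4 => j /andP[j_gt0 le_j4].
rewrite take_gaps ?(leq_trans le_j4) // sumn_gaps; last first.
  move=> i k /andP[+ le_kj]; rewrite leq_eqVlt => /orP[/eqP -> //|lt_ik].
  by apply/ltnW/X_incr; lia.
have := X_incr 0 j; rewrite addn0 /osc_rel !inE; lia.
Qed.

Lemma odd_nth_gaps n i : i < n -> X (a + i) <= X (a + i.+1) ->
  odd (X (a + i.+1)) = odd (X (a + i)) (+) odd (nth 0 (gaps X a n) i).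
Proof.
move=> lt_in le_X; rewrite /gaps (nth_map 0) ?size_iota // nth_iota // add0n.
by rewrite -oddD subnKC.
Qed.

End Gaps.

Definition code_alph : seq nat := [:: 0; 1; 2; 3; 5].

(* Every triple of consecutive interior codes of a pattern of an oscillation
   is in this list, as [admissible_all_gaps] checks exhaustively. *)
Definition admissible_triples : seq (nat * nat * nat) :=
  [:: (0, 0, 0); (0, 0, 1); (0, 0, 2); (0, 0, 3); (0, 0, 5); (0, 1, 0); (0, 2, 1); (0, 2, 3);
      (0, 2, 5); (0, 3, 0); (0, 5, 0); (1, 0, 0); (1, 0, 1); (1, 0, 2); (1, 0, 3); (1, 0, 5);
      (2, 1, 0); (2, 3, 0); (2, 5, 0); (3, 0, 0); (5, 0, 1); (5, 0, 3); (5, 0, 5)].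

Definition admissible (c0 c1 c2 : nat) : bool := (c0, c1, c2) \in admissible_triples.

(* Capping a gap at [4] or [5] keeps its parity, and whether the partial sums
   of positive gaps equal [1] or [3]. *)
Definition cap_gap (g : nat) : nat := if g < 4 then g else 4 + odd g.

Lemma odd_cap_gap g : odd (cap_gap g) = odd g.
Proof. by rewrite /cap_gap; case: ltnP => // _; case: (odd g). Qed.

Lemma gap_code_cap b gs : all (leq 1) gs -> gap_code b (map cap_gap gs) = gap_code b gs.
Proof.
move=> gs_pos; apply: eq_bits4 => j _; rewrite -map_take; congr (b && _).
have pos : {in take j gs, forall g, 0 < g} by move=> g /mem_take /(allP gs_pos).
move: (take j gs) pos => l pos.
have [small|/allPn[g g_in big]] := boolP (all (fun g => g < 4) l).
  by rewrite map_id_in // => g /(allP small) /= lt4; rewrite /cap_gap lt4.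
have le_sum (s : seq nat) x : x \in s -> x <= sumn s.
  by elim: s => //= y s IH; rewrite inE => /orP[/eqP ->|/IH]; lia.
have := le_sum _ _ g_in; have := le_sum _ _ (map_f cap_gap g_in).
rewrite /cap_gap (negbTE big) !inE; move: (sumn _) (sumn l) => x y; lia.
Qed.

Lemma odd_nth_cap_gap gs i : odd (nth 0 (map cap_gap gs) i) = odd (nth 0 gs i).
Proof.
case: (ltnP i (size gs)) => [lt_i|le_i]; first by rewrite (nth_map 0) ?odd_cap_gap.
by rewrite !nth_default ?size_map.
Qed.

Definition admissible_gaps (b : bool) (gs : seq nat) : bool :=
  let b1 := b (+) odd (nth 0 gs 0) in
  admissible (gap_code b gs) (gap_code b1 (drop 1 gs))
             (gap_code (b1 (+) odd (nth 0 gs 1)) (drop 2 gs)).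

Lemma capped_gaps gs : all (leq 1) gs -> map cap_gap gs \in words (iota 1 5) (size gs).
Proof.
move=> gs_pos; rewrite -(size_map cap_gap).
apply: mem_words => _ /mapP[g /(allP gs_pos) g_pos ->].
rewrite mem_iota /cap_gap; case: (ltnP g 4) => [lt_g4|_]; last by case: (odd g).
by rewrite g_pos (ltn_trans lt_g4).
Qed.

Lemma gap_code_alph b gs : all (leq 1) gs -> size gs = 4 -> gap_code b gs \in code_alph.
Proof.
move=> gs_pos size_gs; rewrite -gap_code_cap //.
have : all (fun gs => (gap_code false gs \in code_alph) && (gap_code true gs \in code_alph))
         (words (iota 1 5) 4) by vm_compute.
have := capped_gaps gs_pos; rewrite size_gs => capped.
by move/allP/(_ _ capped); case: b => /andP[].
Qed.

Lemma admissible_gaps_cap b gs : all (leq 1) gs ->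
  admissible_gaps b (map cap_gap gs) = admissible_gaps b gs.
Proof.
move=> gs_pos; have drop_pos d : all (leq 1) (drop d gs).
  by apply/allP => g /mem_drop /(allP gs_pos).
by rewrite /admissible_gaps !odd_nth_cap_gap -!map_drop !gap_code_cap.
Qed.

Lemma admissible_all_gaps b gs : all (leq 1) gs -> size gs = 6 -> admissible_gaps b gs.
Proof.
move=> gs_pos size_gs; rewrite -admissible_gaps_cap //.
have : all (fun gs => admissible_gaps false gs && admissible_gaps true gs)
         (words (iota 1 5) 6) by vm_compute.
have := capped_gaps gs_pos; rewrite size_gs => capped.
by move/allP/(_ _ capped); case: b => /andP[].
Qed.

Lemma osc_code_admissible X a : (forall i j, i < j <= 6 -> X (a + i) < X (a + j)) ->
  admissible (osc_code X a) (osc_code X a.+1) (osc_code X a.+2).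
Proof.
move=> X_incr.
have X_step i : i < 6 -> X (a + i) <= X (a + i.+1) by move=> ?; apply/ltnW/X_incr; lia.
have code_drop d : d <= 2 ->
    osc_code X (a + d) = gap_code (odd (X (a + d))) (drop d (gaps X a 6)).
  move=> le_d2; rewrite drop_gaps (osc_code_gaps (n := 6 - d)) //; first lia.
  by move=> i j ?; rewrite -!addnA; apply: X_incr; lia.
have code0 : osc_code X a = gap_code (odd (X a)) (gaps X a 6).
  by have := code_drop 0 isT; rewrite addn0.
have code1 : osc_code X a.+1 =
    gap_code (odd (X a) (+) odd (nth 0 (gaps X a 6) 0)) (drop 1 (gaps X a 6)).
  by have := code_drop 1 isT; rewrite (odd_nth_gaps (n := 6) (i := 0)) ?X_step // addn0 addn1.
have code2 : osc_code X a.+2 = gap_code (odd (X a) (+) odd (nth 0 (gaps X a 6) 0)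
                                 (+) odd (nth 0 (gaps X a 6) 1)) (drop 2 (gaps X a 6)).
  have := code_drop 2 isT; rewrite (odd_nth_gaps (n := 6) (i := 1)) ?X_step //.
  by rewrite (odd_nth_gaps (n := 6) (i := 0)) ?X_step // addn0 addn2.
rewrite code0 code1 code2; apply: admissible_all_gaps; last exact: size_gaps.
by apply: gaps_pos => i ?; apply: X_incr; lia.
Qed.

Lemma osc_code_alph X a : (forall i j, i < j <= 4 -> X (a + i) < X (a + j)) ->
  osc_code X a \in code_alph.
Proof.
move=> X_incr; rewrite (osc_code_gaps (n := 4)) //.
apply: gap_code_alph; last exact: size_gaps.
by apply: gaps_pos => i ?; apply: X_incr; lia.
Qed.

(** * Counting admissible words *)

Definition extends_admissibly (c : nat) (w : seq nat) : bool :=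
  if w is a :: b :: _ then admissible c a b else true.

Fixpoint adm_words (m : nat) : seq (seq nat) :=
  if m is m'.+1 then
    flatten [seq [seq c :: w | c <- code_alph & extends_admissibly c w] | w <- adm_words m']
  else [:: [::]].

Lemma adm_wordsS m : adm_words m.+1 =
  flatten [seq [seq c :: w | c <- code_alph & extends_admissibly c w] | w <- adm_words m].
Proof. by []. Qed.

Lemma adm_words_alph m w : w \in adm_words m -> size w = m /\ all (mem code_alph) w.
Proof.
elim: m w => [|m IH] w; first by rewrite inE => /eqP ->.
rewrite adm_wordsS => /flatten_mapP[w' w'_in /mapP[c]]; rewrite mem_filter => /andP[_ c_in] ->.
by have [<- all_w'] := IH _ w'_in; rewrite /= c_in all_w'.
Qed.

Lemma adm_words_head m w : w \in adm_words m.+3 ->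
  exists c a b r, w = [:: c, a, b & r] /\ admissible c a b.
Proof.
rewrite adm_wordsS => /flatten_mapP[w' w'_in /mapP[c]]; rewrite mem_filter => /andP[ext _] ->.
have [size_w' _] := adm_words_alph w'_in.
by move: size_w' ext; case: w' {w'_in} => [|a [|b r]] //= _ adm; exists c, a, b, r.
Qed.

Lemma adm_wordsP w : {subset w <= code_alph} ->
  (forall i, i.+2 < size w -> admissible (nth 0 w i) (nth 0 w i.+1) (nth 0 w i.+2)) ->
  w \in adm_words (size w).
Proof.
elim: w => [|c w IH] // sub_w adm_w.
have w_in : w \in adm_words (size w).
  apply: IH => [x x_in|i lt_i]; first by apply: sub_w; rewrite inE x_in orbT.
  exact: (adm_w i.+1).
rewrite adm_wordsS; apply/flatten_mapP; exists w => //.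
apply/mapP; exists c => //; rewrite mem_filter sub_w ?mem_head // andbT.
by case: w {IH w_in sub_w} adm_w => [|a [|b r]] // /(_ 0 isT).
Qed.

(* A positive super-eigenvector, for the eigenvalue 9/4, of the transfer
   matrix of admissible triples. *)
Definition weight (a b : nat) : nat :=
  match a, b with
  | 0, 0 => 51 | 0, 1 => 51 | 0, 2 => 37 | 0, 3 => 51 | 0, 5 => 51
  | 1, 0 => 31 | 2, 1 => 17 | 2, 3 => 17 | 2, 5 => 17 | 3, 0 => 31 | 5, 0 => 31
  | _, _ => 0 end.

Definition head_weight (w : seq nat) : nat := if w is a :: b :: _ then weight a b else 0.

Definition total_weight (m : nat) : nat := \sum_(w <- adm_words m) head_weight w.

Lemma weight_eigen a b : a \in code_alph -> b \in code_alph ->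
  4 * \sum_(c <- code_alph | admissible c a b) weight c a <= 9 * weight a b.
Proof.
have : all (fun a => all (fun b =>
    4 * \sum_(c <- code_alph | admissible c a b) weight c a <= 9 * weight a b)
  code_alph) code_alph.
  by rewrite unlock; vm_compute.
by move=> /allP check a_in /(allP (check a a_in)).
Qed.

Lemma weight_admissible c a b : admissible c a b -> 17 <= weight c a.
Proof.
have : all (fun t => 17 <= weight t.1.1 t.1.2) admissible_triples by [].
by move/allP => check adm; apply: (check (c, a, b)).
Qed.

Lemma total_weightS m : 4 * total_weight m.+3 <= 9 * total_weight m.+2.
Proof.
rewrite {1}/total_weight adm_wordsS big_flatten big_map /total_weight !big_distrr.
rewrite big_seq [X in _ <= X]big_seq; apply: leq_sum => w w_in.
have [size_w /allP all_w] := adm_words_alph w_in.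
case: w w_in size_w all_w => [|a [|b r]] // _ _ all_w.
rewrite big_map big_filter; apply: weight_eigen; apply: all_w; rewrite !inE eqxx ?orbT //.
Qed.

Lemma total_weight_bound m : 4 ^ m * total_weight m.+2 <= 385 * 9 ^ m.
Proof.
elim: m => [|m IH]; first by rewrite /total_weight unlock; vm_compute.
have := total_weightS m; rewrite !expnS.
move: IH; move: (4 ^ m) (9 ^ m) (total_weight _) (total_weight _) => x y w2 w3; nia.
Qed.

Lemma size_adm_words_le m : 17 * 4 ^ m.+1 * size (adm_words m.+3) <= 385 * 9 ^ m.+1.
Proof.
have le_size : 17 * size (adm_words m.+3) <= total_weight m.+3.
  rewrite -sum1_size big_distrr /total_weight big_seq [X in _ <= X]big_seq.
  apply: leq_sum => w /adm_words_head[c [a [b [r [-> adm]]]]].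
  exact: weight_admissible adm.
have := total_weight_bound m.+1.
move: le_size; move: (4 ^ m.+1) (size _) (total_weight _) => x s w; nia.
Qed.

(** * Counting the patterns of the oscillations *)

Definition osc_patterns (n : nat) : {set 'S_n} :=
  [set s | `[< exists t, contains s (osc t) >]].

Lemma incr_gap (F : nat -> nat) k : (forall a b, a < b < k -> F a < F b) ->
  forall a b, a <= b < k -> F a + (b - a) <= F b.
Proof.
move=> F_incr a b /andP[]; elim: b => [|b IH] le_ab lt_bk.
  by move: le_ab; rewrite leqn0 => /eqP ->; rewrite subnn addn0.
case: (ltngtP a b.+1) => [lt_ab|gt_ab|<-]; [|lia|by rewrite subnn addn0].
have := IH ltac:(lia) ltac:(lia); have := F_incr b b.+1 ltac:(lia); lia.
Qed.

Lemma osc_pattern_short k t (p : 'S_k) : contains p (osc t) -> short_inversions p.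
Proof.
case/osc_patternP => F [F_incr _ F_inv] a b lt_abk; rewrite F_inv //.
have := incr_gap F_incr (a := a) (b := b); rewrite /osc_inv /osc_rel; lia.
Qed.

Section PatternCodes.

Variables (k t : nat) (p : 'S_k) (F : nat -> nat).
Hypothesis F_incr : forall a b, a < b < k -> F a < F b.
Hypothesis F_lt : forall a, a < k -> F a < (osc_mid t).+2.
Hypothesis F_inv : forall a b, a < b < k ->
  (nat_ext p b < nat_ext p a) = osc_inv (osc_mid t) (F a) (F b).

Lemma pattern_code a : 0 < a -> a + 6 <= k -> code p a = osc_code F a.
Proof.
move=> a_gt0 le_ak; apply: eq_bits4 => j /andP[j_gt0 le_j4].
have lt_ak : a + j < k by lia.
rewrite /inv_at lt_ak F_inv ?lt_ak ?andbT; last lia.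
have := F_incr (a := 0) (b := a); have := F_incr (a := a + j) (b := k.-1).
have := F_lt (a := k.-1).
rewrite /osc_inv /osc_rel; lia.
Qed.

Lemma pattern_code_alph a : 0 < a -> a + 6 <= k -> code p a \in code_alph.
Proof.
move=> a_gt0 le_ak; rewrite pattern_code //.
by apply: osc_code_alph => i j lt_ij; apply: F_incr; lia.
Qed.

Lemma pattern_code_admissible a : 0 < a -> a + 8 <= k ->
  admissible (code p a) (code p a.+1) (code p a.+2).
Proof.
move=> a_gt0 le_ak; rewrite !pattern_code //; try lia.
by apply: osc_code_admissible => i j lt_ij; apply: F_incr; lia.
Qed.

End PatternCodes.

Definition enc_candidates (m : nat) : seq (seq nat) :=
  [seq c :: v | c <- iota 0 16,
                v <- [seq w ++ r | w <- adm_words m, r <- words (iota 0 16) 5]].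

Lemma size_enc_candidates m : size (enc_candidates m) = 16 * (size (adm_words m) * 16 ^ 5).
Proof. by rewrite size_allpairs size_allpairs size_words size_iota. Qed.

Lemma enc_osc_pattern k t (p : 'S_k) : 9 <= k -> contains p (osc t) ->
  enc p \in enc_candidates (k - 6).
Proof.
move=> le9k /osc_patternP[F [F_incr F_lt F_inv]].
have code_lt16 a : code p a \in iota 0 16 by rewrite mem_iota bits4_lt.
rewrite /enc; have -> : iota 0 k = 0 :: iota 1 (k - 6) ++ iota (k - 5) 5.
  have split_k : k = 1 + ((k - 6) + 5) by lia.
  by rewrite {1}split_k !iotaD add0n (_ : 1 + (k - 6) = k - 5) //; lia.
rewrite map_cons map_cat; apply: (allpairs_f (fun c v => c :: v)) => //.
apply: (allpairs_f (fun w r => w ++ r)); last first.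
  rewrite -[5](size_map (code p) (iota (k - 5) 5)) ?size_iota //.
  by apply: mem_words => c /mapP[a _ ->].
rewrite -[X in adm_words X](size_iota 1 (k - 6)) -(size_map (code p)); apply: adm_wordsP.
  move=> c /mapP[a]; rewrite mem_iota => lt_a ->.
  by apply: (pattern_code_alph F_incr F_lt F_inv); lia.
move=> i; rewrite size_map size_iota => lt_i.
rewrite !(nth_map 0) ?size_iota ?nth_iota; try lia.
have -> : 1 + i.+1 = (1 + i).+1 by lia.
have -> : 1 + i.+2 = (1 + i).+2 by lia.
by apply: (pattern_code_admissible F_incr F_lt F_inv); lia.
Qed.

Lemma card_le_size (T : finType) (S : {set T}) (f : T -> seq nat) (l : seq (seq nat)) :
  {in S &, injective f} -> (forall x, x \in S -> f x \in l) -> #|S| <= size l.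
Proof.
move=> f_inj f_in; rewrite cardE -(size_map f); apply: uniq_leq_size.
  by rewrite map_inj_in_uniq ?enum_uniq // => x y; rewrite !mem_enum; exact: f_inj.
by move=> y /mapP[x]; rewrite mem_enum => x_in ->; apply: f_in.
Qed.

Lemma card_osc_patterns_le n : 9 <= n ->
  4 ^ n * #|osc_patterns n| <= 16 ^ 6 * 4 ^ 8 * 385 * 9 ^ n.
Proof.
move=> le9n; have le_card : #|osc_patterns n| <= size (enc_candidates (n - 6)).
  apply: (card_le_size (f := @enc n)) => [s1 s2|s]; rewrite !inE.
    move=> /asboolP[t1 /osc_pattern_short short1] /asboolP[t2 /osc_pattern_short short2].
    exact: enc_inj.
  by move=> /asboolP[t]; apply: enc_osc_pattern.
have [m def_n] : exists m, n = m + 9 by exists (n - 9); lia.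
rewrite size_enc_candidates def_n (_ : m + 9 - 6 = m.+3) in le_card; last lia.
have split_exp x : x ^ (m + 9) = x ^ m.+1 * x ^ 8 by rewrite -expnD addSnnS.
have := size_adm_words_le m; rewrite def_n !split_exp.
move: le_card; move: #|_| (size _) (4 ^ m.+1) (9 ^ m.+1) => c s x y; nia.
Qed.

(** * Growth estimates *)

Local Open Scope ring_scope.

Lemma bernoulli_le (R : realFieldType) (x : R) n : 0 <= x -> 1 + n%:R * x <= (1 + x) ^+ n.
Proof.
move=> x_ge0; elim: n => [|n IH]; first by rewrite mul0r addr0 expr0.
rewrite exprS -addn1 natrD; have := ler0n R n; nra.
Qed.

Lemma expr_gt_nat (R : archiRealFieldType) (q : R) (C : nat) : 1 < q ->
  exists n0 : nat, forall n : nat, (n0 < n)%N -> C%:R < q ^+ n.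
Proof.
move=> q_gt1; pose d := q - 1; have d_gt0 : 0 < d by rewrite subr_gt0.
exists (Num.bound (C%:R / d)) => n lt_n.
have Cd_ge0 : 0 <= C%:R / d by apply: divr_ge0; rewrite ?ler0n ?ltW.
have lt_Cn : C%:R / d < n%:R.
  by apply: lt_le_trans (archi_boundP Cd_ge0) _; rewrite ler_nat ltnW.
have := bernoulli_le n (ltW d_gt0); rewrite (_ : 1 + d = q); last by rewrite /d addrC subrK.
apply: lt_le_trans.
by rewrite ltr_pdivrMr // in lt_Cn; lra.
Qed.

Lemma osc_patterns_lt (R : archiRealFieldType) (a : R) : 9 / 4 < a ->
  exists n0 : nat, forall n : nat, (n0 < n)%N -> #|osc_patterns n|%:R < a ^+ n.
Proof.
move=> a_gt; have q_gt1 : 1 < 4 * a / 9 by rewrite ltr_pdivlMr //; lra.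
have [n1 n1P] := expr_gt_nat (16 ^ 6 * 4 ^ 8 * 385) q_gt1.
exists (maxn 9 n1) => n; rewrite gtn_max => /andP[lt9n lt_n1n].
have le_card := card_osc_patterns_le (ltnW lt9n).
rewrite -(ltr_pM2l (_ : 0 < 4 ^+ n)) ?exprn_gt0 // -exprMn.
apply: le_lt_trans (_ : (16 ^ 6 * 4 ^ 8 * 385)%:R * 9 ^+ n < _).
  by rewrite -!natrX -!natrM ler_nat.
rewrite (_ : 4 * a = 4 * a / 9 * 9); last by field.
by rewrite exprMn ltr_pM2r ?exprn_gt0 // n1P.
Qed.

Lemma quintic_lt0 (R : realFieldType) (x : R) : x <= 9 / 4 ->
  x ^+ 5 - x ^+ 4 - 2 * x ^+ 3 - 2 * x ^+ 2 - x - 1 < 0.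
Proof.
move=> le_x; have x2 : 0 <= x ^+ 2 by rewrite sqr_ge0.
have [x_lt0|x_ge0] := ltrP x 0.
  have -> : x ^+ 5 - x ^+ 4 - 2 * x ^+ 3 - 2 * x ^+ 2 - x - 1 =
            x * (x ^+ 2 - 1) ^+ 2 - x ^+ 2 * x ^+ 2 - x ^+ 2 - (x + 1) ^+ 2 by ring.
  have := mulr_le0_ge0 (ltW x_lt0) (sqr_ge0 (x ^+ 2 - 1)).
  have := sqr_ge0 (x + 1); have : 0 < x ^+ 2 by rewrite expr2; nra.
  nra.
have -> : x ^+ 5 - x ^+ 4 - 2 * x ^+ 3 - 2 * x ^+ 2 - x - 1 =
          x ^+ 3 * ((x - 2) * (x + 1)) - (2 * x ^+ 2 + x + 1) by ring.
have x3 : x ^+ 3 = x * x ^+ 2 by rewrite exprS.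
have [le_x2|lt_x2] := lerP x 2.
  have : x ^+ 3 * ((x - 2) * (x + 1)) <= 0 by apply: mulr_ge0_le0; rewrite ?exprn_ge0 //; nra.
  lra.
have : x ^+ 3 * ((x - 2) * (x + 1)) <= 729 / 64 * (13 / 16).
  apply: ler_pM; rewrite ?exprn_ge0 //; nra.
have : 4 <= x ^+ 2 by rewrite expr2; nra.
lra.
Qed.

Lemma quintic_root_gt (R : realFieldType) (r : R) :
  r ^+ 5 - r ^+ 4 - 2 * r ^+ 3 - 2 * r ^+ 2 - r - 1 = 0 -> 9 / 4 < r.
Proof. by move=> root_r; rewrite ltNge; apply/negP => /quintic_lt0; rewrite root_r ltxx. Qed.

Unset Implicit Arguments.
Set Strict Implicit.

Theorem mainTheorem11 (R : realType) (r : R)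
  (hr : r ^+ 5 - r ^+ 4 - 2 * r ^+ 3 - 2 * r ^+ 2 - r - 1 = 0)
  (hr_unique : forall y : R,
     y ^+ 5 - y ^+ 4 - 2 * y ^+ 3 - 2 * y ^+ 2 - y - 1 = 0 -> y = r) :
  forall eps : R, 0 < eps -> uncountable_family (K_class (r + eps)).
Proof.
move=> eps eps_gt0; apply: (uncountable_downsets osc_antichain) => A.
split; first exact: downset_closed.
have r_eps_gt : 9 / 4 < r + eps by have := quintic_root_gt hr; lra.
have [n0 n0P] := osc_patterns_lt r_eps_gt.
exists n0 => n /n0P; apply: le_lt_trans; rewrite ler_nat.
exact: level_count_downset.
Qed.
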